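(* Let $X\in\mathbb{R}^{n\times p}$ with columns $X_1,\ldots,X_p$, let $\lambda_1>0$, and assume $np<p(p-1)/2$. (SPLICE) Let $D\in\mathbb{R}^{p\times p}$ be any diagonal matrix with positive diagonal entries (the previous iterate $\hat D^{(i-1)}$). Then there is a minimizer $\hat B$, over matrices $B\in\mathbb{R}^{p\times p}$ with zero diagonal, of $$ -\tfrac12\log\det D + \tfrac12\sum_{m=1}^p \frac{1}{D_{mm}^2}\big\|X_m - X_{-m}(B_{m\cdot})^T\big\|_2^2 + \lambda_1\|B\|_1 $$ such that $\hat\Omega^{\mathrm{spl}} = D^{-2}(I-\hat B)$ satisfies $\operatorname{card}\operatorname{vech}\hat\Omega^{\mathrm{spl}}\le np$. (SPACE) Let $\Omega_{\mathrm{diag}}$ be any diagonal matrix with positive diagonal entries (the previous iterate). Then there is a minimizer $\hat\Omega_{\mathrm{off}}$, over symmetric matrices $\Omega_{\mathrm{off}}\in\mathbb{R}^{p\times p}$ with zero diagonal, of $$ -\tfrac12\log\det\Omega_{\mathrm{diag}} + \tfrac12\sum_{m=1}^p\Omega_{\mathrm{diag},mm}\Big\|X_m-\sum_{j\ne m}\Omega_{\mathrm{off},mj}\sqrt{\Omega_{\mathrm{diag},jj}/\Omega_{\mathrm{diag},mm}}\,X_j\Big\|_2^2+\lambda_1\|\Omega_{\mathrm{off}}\|_1 $$ such that $\hat\Omega^{\mathrm{spc}} = \Omega_{\mathrm{diag}}+\hat\Omega_{\mathrm{off}}$ satisfies $\operatorname{card}\operatorname{vech}\hat\Omega^{\mathrm{spc}}\le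 np$. That is, for every iteration $i$ of the alternating minimization defining the SPLICE and SPACE estimators, there exist SPLICE and SPACE estimates at the end of iteration $i$ with at most $np$ nonzero strictly lower-triangular entries.
   Context: The SPLICE estimator alternately minimizes the displayed SPLICE objective over a diagonal matrix $D$ and a zero-diagonal matrix $B$, forming at iteration $i$ the estimate $\hat\Omega^{\mathrm{spl},(i)} = (\hat D^{(i-1)})^{-2}(I-\hat B^{(i)})$, where $\hat B^{(i)}$ minimizes over $B$ with $D=\hat D^{(i-1)}$ fixed. The SPACE estimator alternately minimizes the displayed SPACE objective over $\Omega_{\mathrm{diag}}$ and $\Omega_{\mathrm{off}}$, with estimate $\hat\Omega^{\mathrm{spc},(i)} = \hat\Omega^{(i)}_{\mathrm{diag}}+\hat\Omega^{(i)}_{\mathrm{off}}$. $X_{-m}$ is $X$ with column $m$ removed; $B_{m\cdot}$ is the $m$th row of $B$ with the entry $B_{mm}$ removed; $\|\cdot\|_1$ is the elementwise $\ell_1$ norm. $\operatorname{vech}$ gives the vector of strictly lower-triangular entries of a $p\times p$ matrix, and $\operatorname{card}$ counts nonzero entries. *)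

From HB Require Import structures.
From mathcomp Require Import all_boot all_order all_algebra.
From mathcomp Require Import all_classical all_reals all_analysis.
Set Implicit Arguments. Unset Strict Implicit. Unset Printing Implicit Defensive.
Import Order.TTheory GRing.Theory Num.Theory.
Local Open Scope ring_scope.

Section Defs.
Variable R : realType.

Definition l1norm (p : nat) (A : 'M[R]_p) : R := \sum_i \sum_j `|A i j|.

Definition zero_diag (p : nat) (A : 'M[R]_p) : Prop := forall i, A i i = 0.

Definition pos_diag (p : nat) (D : 'M[R]_p) : Prop :=
  is_diag_mx D /\ forall i, 0 < D i i.

Definition card_vech (p : nat) (A : 'M[R]_p) : nat :=
  #|[set ij : 'I_p * 'I_p | (ij.2 < ij.1)%N && (A ij.1 ij.2 != 0)]|.

Definition splice_obj (n p : nat) (X : 'M[R]_(n, p)) (lam : R)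
    (D B : 'M[R]_p) : R :=
  - (1/2) * ln (\det D)
  + (1/2) * \sum_(m < p) ((D m m) ^+ 2)^-1 *
      \sum_(k < n) (X k m - \sum_(j < p | j != m) X k j * B m j) ^+ 2
  + lam * l1norm B.

Definition space_obj (n p : nat) (X : 'M[R]_(n, p)) (lam : R)
    (Od Oo : 'M[R]_p) : R :=
  - (1/2) * ln (\det Od)
  + (1/2) * \sum_(m < p) Od m m *
      \sum_(k < n) (X k m - \sum_(j < p | j != m)
                      Oo m j * Num.sqrt (Od j j / Od m m) * X k j) ^+ 2
  + lam * l1norm Oo.

Definition splice_est (p : nat) (D B : 'M[R]_p) : 'M[R]_p :=
  invmx (D *m D) *m (1%:M - B).

End Defs.

From HB Require Import structures.
From mathcomp Require Import all_boot all_order all_algebra.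
From mathcomp Require Import all_classical all_reals all_analysis.
From mathcomp Require Import ring lra.
Import Order.TTheory GRing.Theory Num.Theory.
Import numFieldTopology.Exports numFieldNormedType.Exports.
Set Implicit Arguments. Unset Strict Implicit. Unset Printing Implicit Defensive.
Local Open Scope ring_scope.

(* For a fixed diagonal factor, both objectives are, up to an additive constant and
   a factor 1/2, lasso problems  |y - A t|^2 + lam' |t|_1  with the n p observations
   indexed by (m, k): the m-th node-wise regression, sample k.  For SPACE the symmetric
   Omega_off is parametrised by its strict lower triangle, i.e. by vech.  A lasso with N
   observations has a minimiser with at most N nonzero coefficients: if the active
   columns of A are dependent, moving along a kernel direction w, in the sign where the
   slope sum_i sg(t_i) w_i of the l1 norm is nonpositive, leaves the fit unchanged and
   does not increase the penalty until a coordinate vanishes; repeat until the active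
   columns are linearly independent, hence at most N of them. *)

Lemma continuous_sumr (R : realType) (T : topologicalType) (K : finType)
    (F : K -> T -> R) :
  (forall k, continuous (F k)) -> continuous (fun x => \sum_k F k x).
Proof.
move=> cF x; elim: (index_enum K) => [|k s IH].
  by under eq_fun do rewrite big_nil; exact: cst_continuous.
by under eq_fun do rewrite big_cons; exact: (continuousD (cF k x) IH).
Qed.

Lemma normrD_sg (R : realDomainType) (x w s : R) : 0 <= s -> (x = 0 -> w = 0) ->
  (x * w < 0 -> s * `|w| <= `|x|) -> `|x + s * w| = `|x| + s * (Num.sg x * w).
Proof.
move=> s_ge0 xw_supp xw_bound; case: (ltrgtP x 0) => [x_lt0|x_gt0|x0].
- rewrite ltr0_sg // (ltr0_norm x_lt0) mulN1r ler0_norm ?opprD ?mulrN //.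
  case: (lerP w 0) => w_sgn; first by nra.
  by have := xw_bound ltac:(nra); rewrite (gtr0_norm w_sgn) (ltr0_norm x_lt0); nra.
- rewrite gtr0_sg // (gtr0_norm x_gt0) mul1r ger0_norm //.
  case: (lerP 0 w) => w_sgn; first by nra.
  by have := xw_bound ltac:(nra); rewrite (ltr0_norm w_sgn) (gtr0_norm x_gt0); nra.
- by rewrite x0 (xw_supp x0) !mulr0 addr0 normr0 add0r.
Qed.

Section Lasso.
Variables (R : realType) (I J : finType) (a : J -> I -> R) (y : J -> R).
Variable lam : R.

Definition lasso_fit (t : I -> R) : R := \sum_k (y k - \sum_i a k i * t i) ^+ 2.
Definition lasso_obj (t : I -> R) : R := lasso_fit t + lam * \sum_i `|t i|.
Definition supp (t : I -> R) : {set I} := [set i | t i != 0].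

Lemma lasso_fit_ge0 t : 0 <= lasso_fit t.
Proof. by apply: sumr_ge0 => k _; exact: sqr_ge0. Qed.

Lemma lasso_obj_ge_coord t i : 0 <= lam -> lam * `|t i| <= lasso_obj t.
Proof.
move=> lam_ge0; apply: ler_wpDl; first exact: lasso_fit_ge0.
by rewrite ler_wpM2l // (bigD1 i) //= lerDl sumr_ge0.
Qed.

Lemma lasso_obj_rV_continuous :
  continuous (fun v : 'rV[R]_#|I| => lasso_obj (fun i => v ord0 (enum_rank i))).
Proof.
have coord i : continuous (fun v : 'rV[R]_#|I| => v ord0 (enum_rank i)).
  exact: coord_continuous.
have fit : continuous (fun v : 'rV[R]_#|I| => lasso_fit (fun i => v ord0 (enum_rank i))).
  apply: continuous_sumr => k v.
  have resid : {for v, continuous (fun v : 'rV[R]_#|I| =>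
                 y k - \sum_i a k i * v ord0 (enum_rank i))}.
    apply: continuousB; first exact: cst_continuous.
    apply: continuous_sumr => i {}v.
    exact: continuousM (@cst_continuous _ _ (a k i) v) (coord i v).
  by under eq_fun do rewrite expr2; exact: (continuousM resid resid).
have pen : continuous (fun v : 'rV[R]_#|I| => \sum_i `|v ord0 (enum_rank i)|).
  apply: continuous_sumr => i v.
  exact: continuous_comp (coord i v) (@norm_continuous _ R^o _).
by move=> v; exact: (continuousD (fit v) (continuousM (@cst_continuous _ _ lam v) (pen v))).
Qed.

Lemma lasso_obj_min_exists : 0 < lam -> exists t0, forall t, lasso_obj t0 <= lasso_obj t.
Proof.
move=> lam_gt0.
pose r := lasso_obj (fun=> 0) / lam.
have r_ge0 : 0 <= r.
  apply: divr_ge0 (ltW lam_gt0); apply: addr_ge0 (lasso_fit_ge0 _) _.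
  by apply: mulr_ge0 (ltW lam_gt0) (sumr_ge0 _ _).
pose box := [set v : 'rV[R]_#|I| | forall j, `[- r, r] (v ord0 j)]%classic.
have box_compact : compact box.
  by apply: (@rV_compact _ _ (fun=> `[- r, r]%classic)) => j; exact: segment_compact.
have box0 : box 0 by move=> j; rewrite /= mxE in_itv /= oppr_le0 r_ge0.
have [c /set_mem box_c c_min] :=
  EVT_min_rV (ex_intro _ _ box0) box_compact
    (continuous_subspaceT lasso_obj_rV_continuous).
exists (fun i => c ord0 (enum_rank i)) => t.
pose v : 'rV[R]_#|I| := \row_j t (enum_val j).
have tv : t = (fun i => v ord0 (enum_rank i)).
  by apply: funext => i; rewrite mxE enum_rankK.
(* Outside the box the penalty alone exceeds [lasso_obj 0]. *)
have [v_box|] := pselect (box v); first by rewrite tv; apply: c_min; rewrite inE.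
move=> /existsNP[j]; rewrite /= in_itv /= -ler_norml => /negP; rewrite -ltNge mxE => r_lt.
apply: le_trans (c_min 0 _) _; first by rewrite inE.
rewrite (_ : (fun i => _) = fun=> 0); last by apply: funext => i; rewrite mxE.
apply: ltW; apply: lt_le_trans (lasso_obj_ge_coord t (enum_val j) (ltW lam_gt0)).
by rewrite -ltr_pdivrMl // mulrC.
Qed.

Definition in_kernel (w : I -> R) := forall k, \sum_i a k i * w i = 0.

Definition free_cols (S : {set I}) :=
  forall w, (forall i, i \notin S -> w i = 0) -> in_kernel w -> forall i, w i = 0.

Definition sg_slope (t w : I -> R) := \sum_i Num.sg (t i) * w i.

Lemma lasso_fitD_ker t w s : in_kernel w ->
  lasso_fit (fun i => t i + s * w i) = lasso_fit t.
Proof.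
move=> w_ker; apply: eq_bigr => k _; congr ((_ - _) ^+ 2).
under eq_bigr do rewrite mulrDr mulrCA.
by rewrite big_split /= -mulr_sumr w_ker mulr0 addr0.
Qed.

Lemma sg_slope_le0_opposite_sign t w i0 : sg_slope t w <= 0 -> t i0 != 0 -> w i0 != 0 ->
  exists i, t i * w i < 0.
Proof.
move=> slope_le0 ti0 wi0; apply/not_existsP => no_neg.
have sg_ge0 i : 0 <= Num.sg (t i) * w i.
  have := no_neg i; move/negP; rewrite -leNgt.
  by case: (sgrP (t i)) => ti; rewrite ?mul0r ?mul1r ?mulN1r ?oppr_ge0 //; nra.
have slope0 : sg_slope t w = 0.
  by apply/eqP; rewrite eq_le slope_le0 sumr_ge0.
have /eqP := psumr_eq0P (fun i _ => sg_ge0 i) slope0 (i := i0) isT.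
by rewrite mulf_eq0 sgr_eq0 (negbTE ti0) (negbTE wi0).
Qed.

Section Descent.
Hypothesis lam_ge0 : 0 <= lam.

Lemma lasso_descent t w : (forall i, t i = 0 -> w i = 0) -> in_kernel w ->
  sg_slope t w <= 0 -> (exists i, t i * w i < 0) ->
  exists t', lasso_obj t' <= lasso_obj t /\ supp t' \proper supp t.
Proof.
move=> w_supp w_ker slope_le0 [i1 neg_i1].
pose P i := t i * w i < 0.
have [j Pj j_min] := @arg_minP _ R _ i1 P (fun i => `|t i| / `|w i|) neg_i1.
(* [s] is the first step at which a coordinate of [t + s w] reaches 0. *)
pose s := `|t j| / `|w j|.
pose t' i := t i + s * w i.
have w_bound i : P i -> s * `|w i| <= `|t i|.
  move=> Pi; have wi0 : w i != 0 by apply/eqP => wi; move: Pi; rewrite /P wi mulr0 ltxx.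
  by rewrite -ler_pdivlMr ?normr_gt0 //; exact: j_min.
have norm_t' i : `|t' i| = `|t i| + s * (Num.sg (t i) * w i).
  exact: normrD_sg (divr_ge0 _ _) (w_supp i) (w_bound i).
have t'j : t' j = 0.
  rewrite /t' /s; move: Pj; rewrite /P.
  case: (ltrgtP (t j) 0) => tj; case: (ltrgtP (w j) 0) => wj; try nra.
  - by rewrite (ltr0_norm tj) (gtr0_norm wj) divfK ?gt_eqF ?addrN.
  - rewrite (gtr0_norm tj) (ltr0_norm wj) invrN mulrN mulNr divfK ?lt_eqF //.
    by rewrite addrN.
have supp_t' : supp t' \subset supp t.
  by apply/fintype.subsetP => i; rewrite !inE; apply: contra => /eqP ti;
    rewrite /t' ti (w_supp i ti) mulr0 addr0.
exists t'; split.
- rewrite /lasso_obj lasso_fitD_ker // lerD2l ler_wpM2l //.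
  under eq_bigr do rewrite norm_t'.
  by rewrite big_split /= -mulr_sumr gerDl mulr_ge0_le0 ?divr_ge0.
- apply/fintype.properP; split => //; exists j; rewrite !inE ?t'j ?eqxx //.
  by apply/eqP => tj; move: Pj; rewrite /P tj mul0r ltxx.
Qed.

Lemma lasso_reduce_step t : free_cols (supp t) \/
  exists t', lasso_obj t' <= lasso_obj t /\ supp t' \proper supp t.
Proof.
have [|/existsNP[w /not_implyP[w_supp /not_implyP[w_ker /existsNP[i0 /eqP wi0]]]]] :=
  pselect (free_cols (supp t)); [by left | right].
have w_supp' i : t i = 0 -> w i = 0 by move=> ti; apply: w_supp; rewrite inE ti eqxx.
have ti0 : t i0 != 0 by apply: contra_neq wi0; exact: w_supp'.
wlog slope_le0 : w w_supp' w_ker wi0 {w_supp} / sg_slope t w <= 0.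
  move=> descend; case: (lerP (sg_slope t w) 0); first exact: descend.
  move=> slope_gt0; apply: (descend (fun i => - w i)).
  - by move=> i /w_supp' ->; rewrite oppr0.
  - by move=> k; under eq_bigr do rewrite mulrN; rewrite sumrN w_ker oppr0.
  - by rewrite oppr_eq0.
  - by rewrite /sg_slope; under eq_bigr do rewrite mulrN; rewrite sumrN oppr_le0 ltW.
exact: lasso_descent w_supp' w_ker slope_le0 (sg_slope_le0_opposite_sign slope_le0 ti0 wi0).
Qed.

Lemma lasso_reduce t : exists t', lasso_obj t' <= lasso_obj t /\ free_cols (supp t').
Proof.
have [m] := ubnP #|supp t|; elim: m t => // m IH t card_lt.
have [free|[t' [le_t' proper_t']]] := lasso_reduce_step t; first by exists t.
have [t'' [le_t'' free'']] := IH t' (leq_trans (proper_card proper_t') card_lt).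
by exists t''; split => //; exact: le_trans le_t'' le_t'.
Qed.

End Descent.

Lemma free_cols_card S : free_cols S -> (#|S| <= #|J|)%N.
Proof.
move=> S_free.
pose M : 'M[R]_(#|S|, #|J|) := \matrix_(r, c) a (enum_val c) (enum_val r).
suff /eqP <- : row_free M by exact: rank_leq_col.
apply: inj_row_free => v vM0.
pose w i := \sum_(r | enum_val r == i) v 0 r.
have w_supp i : i \notin S -> w i = 0.
  by move=> iS; apply: big_pred0 => r; apply: contraNF iS => /eqP <-; exact: enum_valP.
have w_ker : in_kernel w.
  move=> k; have /rowP/(_ (enum_rank k)) := vM0; rewrite !mxE => vMk.
  rewrite -[RHS]vMk (partition_big enum_val predT) //=; apply: eq_bigr => i _.
  rewrite /w mulr_sumr; apply: eq_big => // r /eqP <-.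
  by rewrite mxE enum_rankK mulrC.
apply/rowP => r; have := S_free w w_supp w_ker (enum_val r).
by rewrite /w (big_pred1 r) ?mxE // => r'; apply/eqP/eqP => [/enum_val_inj|->].
Qed.

Lemma lasso_obj_zero_out (P : pred I) t : 0 <= lam -> (forall k i, P i -> a k i = 0) ->
  lasso_obj (fun i => if P i then 0 else t i) <= lasso_obj t.
Proof.
move=> lam_ge0 a_P.
have fit_eq : lasso_fit (fun i => if P i then 0 else t i) = lasso_fit t.
  apply: eq_bigr => k _; congr ((_ - _) ^+ 2); apply: eq_bigr => i _.
  by case: ifP => // Pi; rewrite a_P // !mul0r.
by rewrite /lasso_obj fit_eq lerD2l ler_wpM2l // ler_sum // => i _; case: ifP; rewrite ?normr0.
Qed.

Theorem lasso_sparse_min (P : pred I) : 0 < lam -> (forall k i, P i -> a k i = 0) ->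
  exists t0, [/\ forall i, P i -> t0 i = 0, forall t, lasso_obj t0 <= lasso_obj t
               & (#|supp t0| <= #|J|)%N].
Proof.
move=> lam_gt0 a_P; have [t1 t1_min] := lasso_obj_min_exists lam_gt0.
have [t2 [le_t2 free_t2]] := lasso_reduce (ltW lam_gt0) t1.
exists (fun i => if P i then 0 else t2 i); split.
- by move=> i ->.
- move=> t; apply: le_trans (lasso_obj_zero_out _ (ltW lam_gt0) a_P) _.
  exact: le_trans le_t2 (t1_min t).
- apply: leq_trans (free_cols_card free_t2); apply: subset_leq_card.
  by apply/fintype.subsetP => i; rewrite !inE; case: (P i); rewrite ?eqxx.
Qed.
End Lasso.

Lemma sumr_pair (V : nmodType) (I J : finType) (F : I * J -> V) :
  \sum_p F p = \sum_i \sum_j F (i, j).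
Proof. by rewrite pair_bigA; apply: eq_bigr => -[]. Qed.

Lemma card_vech_le_sparse (R : realType) n p (A : 'M[R]_p) (t : 'I_p * 'I_p -> R) :
  (#|supp t| <= #|{: 'I_p * 'I_n}|)%N ->
  (forall i j : 'I_p, (j < i)%N -> A i j != 0 -> t (i, j) != 0) ->
  (card_vech A <= n * p)%N.
Proof.
rewrite card_prod !card_ord mulnC => card_t At; apply: leq_trans card_t.
apply/subset_leq_card/fintype.subsetP => -[i j]; rewrite !inE /=.
by case/andP => ji /(At _ _ ji).
Qed.

Section Splice.
Variables (R : realType) (n p : nat) (X : 'M[R]_(n, p)) (lam : R) (D : 'M[R]_p).

Definition splice_design (mk : 'I_p * 'I_n) (ij : 'I_p * 'I_p) : R :=
  if (ij.1 == mk.1) && (ij.2 != mk.1) then X mk.2 ij.2 / D mk.1 mk.1 else 0.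

Definition splice_response (mk : 'I_p * 'I_n) : R := X mk.2 mk.1 / D mk.1 mk.1.

Lemma splice_objE B : splice_obj X lam D B = - (1/2) * ln (\det D) +
  (1/2) * lasso_obj splice_design splice_response (2 * lam) (fun ij => B ij.1 ij.2).
Proof.
rewrite /splice_obj /lasso_obj /lasso_fit -addrA mulrDr.
congr (_ + (_ * _ + _)); last by rewrite /l1norm sumr_pair /=; field.
rewrite sumr_pair; apply: eq_bigr => m _; rewrite mulr_sumr; apply: eq_bigr => k _.
have off_rows : \sum_(i | i != m) \sum_j splice_design (m, k) (i, j) * B i j = 0.
  by apply: big1 => i /negbTE im; apply: big1 => j _; rewrite /splice_design /= im mul0r.
rewrite [in RHS]sumr_pair [in RHS](bigD1 m) //= off_rows addr0.
rewrite /splice_response /splice_design /= eqxx /= (big_mkcond (fun j => j != m)) /=.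
rewrite -exprVn -exprMn mulrBr mulr_sumr [_^-1 * X k m]mulrC; congr ((_ - _) ^+ 2).
by apply: eq_bigr => j _; case: ifP => _; rewrite ?mulr0 ?mul0r // mulrCA mulrA.
Qed.

Hypothesis D_pos : pos_diag D.

Lemma splice_est_entry B i j : D i i ^+ 2 * splice_est D B i j = (1%:M - B) i j.
Proof.
case: D_pos => /diag_mxP[d D_d] D_gt0.
have d_D l : d 0 l = D l l by rewrite D_d mxE eqxx mulr1n.
have DD_unit : D *m D \in unitmx.
  rewrite unitmxE det_mulmx unitrM andbb D_d det_diag unitfE prodf_seq_neq0.
  by apply/allP => l _; rewrite d_D gt_eqF.
have := mulKVmx DD_unit (1%:M - B); rewrite -/(splice_est D B).
set E := splice_est D B => <-.
by rewrite [in RHS]D_d -mulmxA !mul_diag_mx !mxE !d_D mulrA.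
Qed.

Theorem splice_sparse_min : 0 < lam ->
  exists Bh : 'M[R]_p,
    [/\ zero_diag Bh,
        forall B, zero_diag B -> splice_obj X lam D Bh <= splice_obj X lam D B
      & (card_vech (splice_est D Bh) <= n * p)%N].
Proof.
move=> lam_gt0.
have [||t0 [t0_diag t0_min t0_card]] := lasso_sparse_min (a := splice_design)
  splice_response (lam := 2 * lam) (P := fun ij => ij.1 == ij.2).
- by rewrite mulr_gt0.
- by move=> k [i j] /= /eqP ->; rewrite /splice_design /=; case: (j == k.1).
pose Bh := \matrix_(i, j) t0 (i, j).
have Bh_t0 : (fun ij => Bh ij.1 ij.2) = t0 by apply: funext => -[i j]; rewrite mxE.
exists Bh; split.
- by move=> i; rewrite mxE t0_diag /=.
- by move=> B _; rewrite !splice_objE lerD2l ler_wpM2l ?divr_ge0 // Bh_t0.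
- apply: card_vech_le_sparse t0_card _ => i j ji; apply: contra => /eqP t0_ij.
  have ij : i != j by apply: contraTneq ji => ->; rewrite ltnn.
  have /eqP : D i i ^+ 2 * splice_est D Bh i j = 0.
    by rewrite splice_est_entry !mxE t0_ij (negbTE ij) subr0.
  by rewrite mulf_eq0 expf_eq0 /= (gt_eqF (D_pos.2 i)).
Qed.
End Splice.

Definition strict_lower (R : realType) p (A : 'M[R]_p) (ij : 'I_p * 'I_p) : R :=
  if (ij.2 < ij.1)%N then A ij.1 ij.2 else 0.

Lemma l1norm_sym (R : realType) p (A : 'M[R]_p) : A^T = A -> zero_diag A ->
  l1norm A = 2 * \sum_ij `|strict_lower A ij|.
Proof.
move=> A_sym A_diag; have A_ji i j : A j i = A i j by rewrite -{1}A_sym mxE.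
have split_ij i j : `|A i j| = `|strict_lower A (i, j)| + `|strict_lower A (j, i)|.
  rewrite /strict_lower /=; case: (ltngtP j i) => [ji|ij|/val_inj ->].
  - by rewrite normr0 addr0.
  - by rewrite normr0 add0r A_ji.
  - by rewrite A_diag normr0 addr0.
rewrite /l1norm sumr_pair mulr_natl mulr2n -[in X in _ = _ + X]exchange_big -big_split /=.
by apply: eq_bigr => i _; rewrite -big_split; apply: eq_bigr => j _.
Qed.

Section Space.
Variables (R : realType) (n p : nat) (X : 'M[R]_(n, p)) (lam : R) (Od : 'M[R]_p).

Let sq (m : 'I_p) : R := Num.sqrt (Od m m).

(* Coordinate [(i, j)] with [j < i] stands for both [Oo i j] and [Oo j i]. *)
Definition space_design (mk : 'I_p * 'I_n) (ij : 'I_p * 'I_p) : R :=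
  if (ij.2 < ij.1)%N then
    (if ij.1 == mk.1 then sq ij.2 * X mk.2 ij.2 else 0) +
    (if ij.2 == mk.1 then sq ij.1 * X mk.2 ij.1 else 0)
  else 0.

Definition space_response (mk : 'I_p * 'I_n) : R := sq mk.1 * X mk.2 mk.1.

Lemma space_design_fit Oo m k : Oo^T = Oo ->
  \sum_ij space_design (m, k) ij * strict_lower Oo ij =
  \sum_(j | j != m) Oo m j * (sq j * X k j).
Proof.
move=> Oo_sym; have Oo_ji i j : Oo j i = Oo i j by rewrite -{1}Oo_sym mxE.
pose F j := Oo m j * (sq j * X k j).
have row_m : \sum_(i : 'I_p) \sum_(j : 'I_p) (if (j < i)%N && (i == m) then F j else 0) =
    \sum_(j : 'I_p | (j < m)%N) F j.
  rewrite (bigD1 m) //= [X in _ + X]big1 ?addr0; last first.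
    by move=> i /negbTE im; apply: big1 => j _; rewrite im andbF.
  by rewrite [RHS]big_mkcond; apply: eq_bigr => j _; rewrite eqxx andbT.
have col_m : \sum_(i : 'I_p) \sum_(j : 'I_p) (if (j < i)%N && (j == m) then F i else 0) =
    \sum_(i : 'I_p | (m < i)%N) F i.
  rewrite [RHS]big_mkcond; apply: eq_bigr => i _.
  rewrite (bigD1 m) //= [X in _ + X]big1 ?addr0 ?eqxx ?andbT //.
  by move=> j /negbTE jm; rewrite jm andbF.
have entry i j : space_design (m, k) (i, j) * strict_lower Oo (i, j) =
    (if (j < i)%N && (i == m) then F j else 0) +
    (if (j < i)%N && (j == m) then F i else 0).
  rewrite /space_design /strict_lower /=; case: (j < i)%N; last by rewrite mul0r addr0.
  rewrite mulrDl /F; congr (_ + _); case: eqP => [->|_]; rewrite ?mul0r //= mulrC //.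
  by rewrite (Oo_ji m i).
rewrite sumr_pair.
under eq_bigr => i _ do rewrite (eq_bigr _ (fun j _ => entry i j)) big_split.
rewrite big_split /= row_m col_m [X in X + _]big_mkcond [X in _ + X]big_mkcond.
rewrite [RHS]big_mkcond -big_split /=.
apply: eq_bigr => j _; rewrite -(inj_eq val_inj) neq_ltn.
by case: (ltngtP j m); rewrite ?addr0 ?add0r.
Qed.

Hypothesis Od_pos : pos_diag Od.

Lemma space_objE Oo : Oo^T = Oo -> zero_diag Oo ->
  space_obj X lam Od Oo = - (1/2) * ln (\det Od) +
    (1/2) * lasso_obj space_design space_response (4 * lam) (strict_lower Oo).
Proof.
move=> Oo_sym Oo_diag; have Od_gt0 := Od_pos.2.
have sq_gt0 m : 0 < sq m by rewrite sqrtr_gt0.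
rewrite /space_obj /lasso_obj /lasso_fit -addrA mulrDr (l1norm_sym Oo_sym Oo_diag).
congr (_ + (_ * _ + _)); last by field.
rewrite sumr_pair; apply: eq_bigr => m _; rewrite mulr_sumr; apply: eq_bigr => k _.
have ratio j : Num.sqrt (Od j j / Od m m) = sq j / sq m.
  by rewrite sqrtrM ?sqrtrV ?(ltW (Od_gt0 _)).
rewrite space_design_fit // /space_response /=; under eq_bigr do rewrite ratio.
rewrite -[Od m m](sqr_sqrtr (ltW (Od_gt0 m))) -/(sq m) -exprMn mulrBr mulr_sumr.
congr ((_ - _) ^+ 2); apply: eq_bigr => j _.
by field; rewrite gt_eqF.
Qed.

Theorem space_sparse_min : 0 < lam ->
  exists Ooh : 'M[R]_p,
    [/\ Ooh^T = Ooh, zero_diag Ooh,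
        forall Oo, Oo^T = Oo -> zero_diag Oo ->
          space_obj X lam Od Ooh <= space_obj X lam Od Oo
      & (card_vech (Od + Ooh) <= n * p)%N].
Proof.
move=> lam_gt0.
have [||t0 [t0_upper t0_min t0_card]] := lasso_sparse_min (a := space_design)
  space_response (lam := 4 * lam) (P := fun ij => ~~ (ij.2 < ij.1)%N).
- by rewrite mulr_gt0.
- by move=> k [i j] /= /negbTE ji; rewrite /space_design /= ji.
pose Ooh := \matrix_(i, j) if (j < i)%N then t0 (i, j) else t0 (j, i).
have Ooh_lower : strict_lower Ooh = t0.
  apply: funext => -[i j]; rewrite /strict_lower /=.
  by case: ifPn => ji; rewrite ?mxE ?ji // t0_upper.
have Ooh_sym : Ooh^T = Ooh.
  by apply/matrixP => i j; rewrite !mxE; case: ltngtP => // /val_inj ->.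
have Ooh_diag : zero_diag Ooh by move=> i; rewrite mxE ltnn t0_upper //= ltnn.
exists Ooh; split => //.
- move=> Oo Oo_sym Oo_diag; rewrite !space_objE // lerD2l ler_wpM2l ?divr_ge0 //.
  by rewrite Ooh_lower.
- apply: card_vech_le_sparse t0_card _ => i j ji; rewrite !mxE ji.
  have [/is_diag_mxP Od_diag _] := Od_pos.
  by rewrite Od_diag ?add0r // neq_ltn ji orbT.
Qed.
End Space.

Theorem corollary1 (R : realType) (n p : nat) (X : 'M[R]_(n, p)) (lam : R) :
  0 < lam -> (n * p < p * (p - 1) %/ 2)%N ->
  (forall D : 'M[R]_p, pos_diag D ->
     exists Bh : 'M[R]_p,
       [/\ zero_diag Bh,
           (forall B : 'M[R]_p, zero_diag B ->
              splice_obj X lam D Bh <= splice_obj X lam D B)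
         & (card_vech (splice_est D Bh) <= n * p)%N])
  /\
  (forall Od : 'M[R]_p, pos_diag Od ->
     exists Ooh : 'M[R]_p,
       [/\ Ooh^T = Ooh, zero_diag Ooh,
           (forall Oo : 'M[R]_p, Oo^T = Oo -> zero_diag Oo ->
              space_obj X lam Od Ooh <= space_obj X lam Od Oo)
         & (card_vech (Od + Ooh) <= n * p)%N]).
Proof.
(* [n p < p (p - 1) / 2] only makes the bound informative. *)
move=> lam_gt0 _; split => [D D_pos | Od Od_pos].
- exact: splice_sparse_min D_pos lam_gt0.
- exact: space_sparse_min Od_pos lam_gt0.
Qed.
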